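(* Let $n\ge1$, $\omega\in(0,1)$, and let $B_1,\dots,B_n$ be independent real-valued service times with finite means $\mu_i$ and variances, satisfying $B_1\le_{\mathrm{dil}}\cdots\le_{\mathrm{dil}}B_n$. Then there is a sequence $\tau\in\mathsf S_n$ minimizing $C(\tau,\boldsymbol\mu,\omega)$ over $\mathsf S_n$ that satisfies $\tau(n)=n$.
   Context: Appointment model: a sequence is a permutation $\tau\in\mathsf S_n$, $\tau(i)$ the patient in slot $i$; a schedule is $\boldsymbol x=(x_1,\dots,x_n)$, $x_j$ the interarrival time between patient $j$ and the next patient; the mean-based schedule is $\boldsymbol\mu=(\mu_1,\dots,\mu_n)$. Waiting and idle times: $W_1=I_1=0$, $W_{i+1}=(W_i+B_{\tau(i)}-x_{\tau(i)})^+$, $I_{i+1}=(W_i+B_{\tau(i)}-x_{\tau(i)})^-$, $a^+=\max\{0,a\}$, $a^-=\max\{0,-a\}$. Cost $C(\tau,\boldsymbol x,\omega)=\omega\sum_{i=1}^n\mathbb EI_i+(1-\omega)\sum_{i=1}^n\mathbb EW_i$. $X\le_{\mathrm{cx}}Y$ means $\mathbb E\phi(X)\le\mathbb E\phi(Y)$ for all convex $\phi$ for which the expectations exist; $X\le_{\mathrm{dil}}Y$ means $X-\mathbb EX\le_{\mathrm{cx}}Y-\mathbb EY$. *)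

From HB Require Import structures.
From mathcomp Require Import all_boot all_order all_algebra.
From mathcomp Require Import all_classical all_reals all_analysis.
From mathcomp Require Import fingroup perm.
Set Implicit Arguments. Unset Strict Implicit. Unset Printing Implicit Defensive.
Import Order.TTheory GRing.Theory Num.Theory.
Local Open Scope classical_set_scope.
Local Open Scope ring_scope.

Definition convex_fun (R : realType) (phi : R -> R) : Prop :=
  forall (x y t : R), 0 <= t -> t <= 1 ->
    phi (t * x + (1 - t) * y) <= t * phi x + (1 - t) * phi y.

Definition independent_rvs (d : measure_display) (T : measurableType d)
  (R : realType) (P : probability T R) (k : nat) (X : 'I_k -> {RV P >-> R}) : Prop :=
  forall A : 'I_k -> set R, (forall j, measurable (A j)) ->
    P (\bigcap_j (X j @^-1` A j)) = (\prod_(j < k) P (X j @^-1` A j))%E.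

Definition finite_mean_var (d : measure_display) (T : measurableType d)
  (R : realType) (P : probability T R) (X : {RV P >-> R}) : Prop :=
  P.-integrable setT (EFin \o X) /\
  P.-integrable setT (EFin \o (fun t => X t ^+ 2)).

(** Real-valued mean (meaningful when the mean is finite). *)
Definition mean (d : measure_display) (T : measurableType d)
  (R : realType) (P : probability T R) (X : T -> R) : R :=
  fine (\int[P]_t (X t)%:E)%E.

(** Convex order:  X <=cx Y  iff  E phi(X) <= E phi(Y) for all convex phi
    for which the expectations exist (read: are finite). *)
Definition le_cx (d : measure_display) (T : measurableType d)
  (R : realType) (P : probability T R) (X Y : T -> R) : Prop :=
  forall phi : R -> R, convex_fun phi ->
    P.-integrable setT (EFin \o (phi \o X)) ->
    P.-integrable setT (EFin \o (phi \o Y)) ->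
    (\int[P]_t (phi (X t))%:E <= \int[P]_t (phi (Y t))%:E)%E.

Definition le_dil (d : measure_display) (T : measurableType d)
  (R : realType) (P : probability T R) (X Y : T -> R) : Prop :=
  le_cx P (fun t => X t - mean P X) (fun t => Y t - mean P Y).

(** Waiting / idle times in slots 0..k (slot i here = slot i+1 of the paper),
    for sequence tau (tau i = patient in slot i), schedule x (x j = interarrival
    time after patient j), service times B. *)
Fixpoint waiting (R : realType) (T : Type) (k : nat) (tau : {perm 'I_k.+1})
  (x : 'I_k.+1 -> R) (B : 'I_k.+1 -> T -> R) (i : nat) (t : T) : R :=
  match i with
  | 0%N => 0
  | i'.+1 => Num.max 0 (waiting tau x B i' t + B (tau (inord i')) t - x (tau (inord i')))
  end.

Definition idle (R : realType) (T : Type) (k : nat) (tau : {perm 'I_k.+1})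
  (x : 'I_k.+1 -> R) (B : 'I_k.+1 -> T -> R) (i : nat) (t : T) : R :=
  match i with
  | 0%N => 0
  | i'.+1 => Num.max 0 (- (waiting tau x B i' t + B (tau (inord i')) t - x (tau (inord i'))))
  end.

Definition cost (d : measure_display) (T : measurableType d)
  (R : realType) (P : probability T R) (k : nat) (B : 'I_k.+1 -> T -> R)
  (tau : {perm 'I_k.+1}) (x : 'I_k.+1 -> R) (w : R) : \bar R :=
  (w%:E * (\sum_(i < k.+1) \int[P]_t (idle tau x B i t)%:E)
   + (1 - w)%:E * (\sum_(i < k.+1) \int[P]_t (waiting tau x B i t)%:E))%E.

(* With the mean-based schedule, the cost of a sequence tau is E Phi(V_0, ..., V_{n-1}),
   where V_i = B_{tau(i)} - mu_{tau(i)} and Phi is a nonnegative combination of the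
   Lindley waiting and idle times; the service time of the last slot never enters.
   Since the waiting times are iterated maxima of affine functions and the total idle
   time is the last waiting time minus a linear term, Phi is convex in each V_j.
   Take an optimal tau and let j be the slot of patient n. Swapping slots j and n only
   changes V_j, from B_n - mu_n to B_m - mu_m with m = tau(n). Both variables are
   independent of the services in the remaining slots, so by Fubini both costs equal
   E h(V_j) for one convex h of linear growth; the dilation order along the chain
   B_m <=dil ... <=dil B_n shows that the swap does not increase the cost. *)

From HB Require Import structures.
From mathcomp Require Import all_boot all_order all_algebra.
From mathcomp Require Import all_classical all_reals all_analysis.
From mathcomp Require Import measurable_realfun.
From mathcomp Require Import fingroup perm.
From mathcomp Require Import ring lra.
Set Implicit Arguments.
Unset Strict Implicit.
Unset Printing Implicit Defensive.
Import Order.TTheory GRing.Theory Num.Theory.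
Import numFieldNormedType.Exports.
Local Open Scope classical_set_scope.
Local Open Scope ring_scope.

Section ConvexFun.
Context {R : realType}.
Implicit Types (f g : R -> R).

Lemma convex_funD f g : convex_fun f -> convex_fun g -> convex_fun (f \+ g).
Proof. by move=> cf cg x y t t0 t1; have := cf x y t t0 t1; have := cg x y t t0 t1 => /=; lra. Qed.

Lemma convex_funZ (c : R) f : 0 <= c -> convex_fun f -> convex_fun (fun z => c * f z).
Proof.
move=> c0 cf x y t t0 t1; have := ler_wpM2l c0 (cf x y t t0 t1).
by rewrite mulrDr !mulrA ![c * t]mulrC ![c * (1 - t)]mulrC -!mulrA.
Qed.

Lemma convex_fun_affine (a b : R) : convex_fun (fun z => a * z + b).
Proof. by move=> x y t _ _; rewrite le_eqVlt; apply/orP; left; apply/eqP; ring. Qed.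

Lemma convex_fun_cst (c : R) : convex_fun (fun=> c).
Proof. by move=> x y t _ _; rewrite le_eqVlt; apply/orP; left; apply/eqP; ring. Qed.

Lemma convex_fun_max f g : convex_fun f -> convex_fun g -> convex_fun (f \max g).
Proof.
move=> cf cg x y t t0 t1; have t1' : 0 <= 1 - t by lra.
rewrite /= ge_max; apply/andP; split.
  apply: le_trans (cf x y t t0 t1) _.
  by apply: lerD; apply: ler_wpM2l => //; rewrite le_max lexx.
apply: le_trans (cg x y t t0 t1) _.
by apply: lerD; apply: ler_wpM2l => //; rewrite le_max lexx orbT.
Qed.

Lemma convex_fun_sum (I : Type) (r : seq I) (F : I -> R -> R) :
  (forall i, convex_fun (F i)) -> convex_fun (fun z => \sum_(i <- r) F i z).
Proof.
move=> cF; elim: r => [|i r IH]; first by move=> x y t _ _; rewrite !big_nil; lra.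
by under eq_fun do rewrite big_cons; exact: convex_funD.
Qed.

End ConvexFun.

Section Lindley.
Variable R : realType.
Implicit Types (v : nat -> R) (w : R).

Fixpoint lindley_wait v i : R :=
  if i is i'.+1 then Num.max 0 (lindley_wait v i' + v i') else 0.

Definition lindley_idle v i : R :=
  if i is i'.+1 then Num.max 0 (- (lindley_wait v i' + v i')) else 0.

Definition lindley_cost w n v : R :=
  w * \sum_(i < n.+1) lindley_idle v i + (1 - w) * \sum_(i < n.+1) lindley_wait v i.

Lemma lindley_wait_ge0 v i : 0 <= lindley_wait v i.
Proof. by case: i => [|i] //=; rewrite le_max lexx. Qed.

Lemma lindley_idle_ge0 v i : 0 <= lindley_idle v i.
Proof. by case: i => [|i] //=; rewrite le_max lexx. Qed.

Lemma lindley_cost_ge0 w n v : 0 <= w <= 1 -> 0 <= lindley_cost w n v.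
Proof.
case/andP=> w0 w1; rewrite addr_ge0 // mulr_ge0 ?subr_ge0 //.
  by apply: sumr_ge0 => i _; exact: lindley_idle_ge0.
by apply: sumr_ge0 => i _; exact: lindley_wait_ge0.
Qed.

Lemma sum_lindley_idle v k :
  \sum_(i < k.+1) lindley_idle v i = lindley_wait v k - \sum_(i < k) v i.
Proof.
elim: k => [|k IH]; first by rewrite big_ord1 big_ord0 subr0.
rewrite big_ord_recr /= IH big_ord_recr /=.
suff -> : Num.max 0 (- (lindley_wait v k + v k))
        = Num.max 0 (lindley_wait v k + v k) - (lindley_wait v k + v k) by lra.
move: (lindley_wait v k + v k) => a.
case: (lerP 0 a) => h.
  by rewrite subrr; apply/max_idPl; rewrite oppr_le0.
by rewrite sub0r; apply/max_idPr; rewrite oppr_ge0 ltW.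
Qed.

Lemma eq_lindley_wait v v' k :
  (forall i, (i < k)%N -> v i = v' i) -> lindley_wait v k = lindley_wait v' k.
Proof.
elim: k => [|k IH] vv' //=.
by rewrite IH ?vv' // => i ik; apply: vv'; exact: ltnW.
Qed.

Lemma eq_lindley_idle v v' k :
  (forall i, (i < k)%N -> v i = v' i) -> lindley_idle v k = lindley_idle v' k.
Proof.
case: k => [|k] vv' //=.
by rewrite (@eq_lindley_wait v v') ?vv' // => i ik; apply: vv'; exact: ltnW.
Qed.

Lemma eq_lindley_cost w n v v' :
  (forall i, (i < n)%N -> v i = v' i) -> lindley_cost w n v = lindley_cost w n v'.
Proof.
move=> vv'; congr (_ * _ + _ * _); apply: eq_bigr => k _.
  by apply: eq_lindley_idle => i ik; apply: vv'; exact: leq_trans ik (ltn_ord k).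
by apply: eq_lindley_wait => i ik; apply: vv'; exact: leq_trans ik (ltn_ord k).
Qed.

Lemma lindley_wait_le v k : lindley_wait v k <= \sum_(i < k) `|v i|.
Proof.
elim: k => [|k IH] /=; first by rewrite big_ord0.
rewrite big_ord_recr /= ge_max addr_ge0 ?sumr_ge0 //=.
by rewrite lerD // ler_norm.
Qed.

Lemma lindley_idle_le v k : lindley_idle v k <= \sum_(i < k) `|v i|.
Proof.
case: k => [|k] /=; first by rewrite big_ord0.
rewrite big_ord_recr /= ge_max addr_ge0 ?sumr_ge0 //=.
have := lindley_wait_ge0 v k; have := ler_norm (- v k).
have : 0 <= \sum_(i < k) `|v i| by exact: sumr_ge0.
rewrite normrN; lra.
Qed.

Lemma sum_norm_ord_le v k m :
  (k <= m)%N -> \sum_(i < k) `|v i| <= \sum_(i < m) `|v i|.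
Proof. by move=> km; rewrite -(subnKC km) big_split_ord lerDl sumr_ge0. Qed.

Lemma lindley_cost_le w n v :
  0 <= w <= 1 -> lindley_cost w n v <= n.+1%:R * \sum_(i < n) `|v i|.
Proof.
case/andP=> w0 w1.
have le_sum (u : nat -> R) : (forall k, u k <= \sum_(i < k) `|v i|) ->
    \sum_(k < n.+1) u k <= n.+1%:R * \sum_(i < n) `|v i|.
  move=> uS; have -> : n.+1%:R * \sum_(i < n) `|v i| = \sum_(k < n.+1) \sum_(i < n) `|v i|.
    by rewrite sumr_const card_ord mulr_natl.
  apply: ler_sum => k _; apply: le_trans (uS k) _.
  exact/sum_norm_ord_le/ltnSE.
have := ler_wpM2l w0 (le_sum _ (lindley_idle_le v)).
have w1' : 0 <= 1 - w by rewrite subr_ge0.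
have := ler_wpM2l w1' (le_sum _ (lindley_wait_le v)).
rewrite /lindley_cost; lra.
Qed.

Lemma sum_with_affine v j k :
  exists a b, forall z, \sum_(i < k) [eta v with j |-> z] i = a * z + b.
Proof.
elim: k => [|k [a [b IH]]]; first by exists 0, 0 => z; rewrite big_ord0; ring.
exists (a + (k == j)%:R), (b + (k != j)%:R * v k) => z.
by rewrite big_ord_recr /= IH; case: eqP => _ /=; ring.
Qed.

Lemma convex_lindley_wait_with v j k :
  convex_fun (fun z => lindley_wait [eta v with j |-> z] k).
Proof.
elim: k => [|k IH] /=; first exact: convex_fun_cst.
apply: convex_fun_max; first exact: convex_fun_cst.
by apply: convex_funD => // x y t _ _ /=; case: eqP => _; lra.
Qed.

Lemma convex_lindley_cost_with w n v j :
  0 <= w <= 1 -> convex_fun (fun z => lindley_cost w n [eta v with j |-> z]).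
Proof.
case/andP=> w0 w1; have [a [b sumE]] := sum_with_affine v j n.
have -> : (fun z => lindley_cost w n [eta v with j |-> z]) =
    (fun z => w * lindley_wait [eta v with j |-> z] n) \+ (fun z => - w * a * z - w * b) \+
    (fun z => (1 - w) * \sum_(i < n.+1) lindley_wait [eta v with j |-> z] i).
  by apply: funext => z; rewrite /lindley_cost sum_lindley_idle sumE /=; ring.
apply: convex_funD; first apply: convex_funD.
- exact/convex_funZ/convex_lindley_wait_with.
- exact: convex_fun_affine.
apply: convex_funZ; first by rewrite subr_ge0.
by apply: convex_fun_sum => i; exact: convex_lindley_wait_with.
Qed.

End Lindley.

(* Test functions for the convex order: [phi (X - c)] is then integrable whenever [X] is,
   as [le_cx] requires. *)
Definition linearly_bounded {R : realType} (phi : R -> R) : Prop :=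
  exists a b : R, forall z, phi z <= a + b * `|z|.

Section IndependentPair.
Context d (T : measurableType d) (R : realType) (P : probability T R).
Context dS (S : measurableType dS).

Definition independent_pair (X : T -> R) (Y : T -> S) : Prop :=
  forall A D, measurable A -> measurable D ->
    P (X @^-1` A `&` Y @^-1` D) = (P (X @^-1` A) * P (Y @^-1` D))%E.

Lemma ge0_integral_independent_pair (X : {mfun T >-> R}) (Y : {mfun T >-> S})
    (G : R * S -> \bar R) :
  independent_pair X Y -> measurable_fun setT G -> (forall z, (0 <= G z)%E) ->
  (\int[P]_t G (X t, Y t) = \int[P]_t fubini_F (distribution P Y) G (X t))%E.
Proof.
move=> XY mG G0.
have mXY : measurable_fun setT (fun t => (X t, Y t)) by exact: measurable_fun_pair.
pose Z := HB.pack_for {mfun T >-> (R * S)%type} (fun t => (X t, Y t))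
  (isMeasurableFun.Build _ _ _ _ (fun t => (X t, Y t)) mXY).
transitivity (\int[distribution P Z]_z G z)%E; first by rewrite ge0_integral_distribution.
transitivity (\int[(distribution P X \x distribution P Y)%E]_z G z)%E.
  apply: eq_measure_integral => E mE _.
  by symmetry; apply: product_measure_unique => // A D mA mD; rewrite /= XY.
rewrite fubini_tonelli1 // ge0_integral_distribution //.
  exact: measurable_fun_fubini_tonelli_F.
by move=> x; apply: integral_ge0 => y _; exact: G0.
Qed.

Section PartialMean.
Variables (Y : {mfun T >-> S}) (F : R -> S -> R) (a : S -> R) (b : R).
Hypothesis mF : measurable_fun setT (fun zs : R * S => F zs.1 zs.2).
Hypothesis F_ge0 : forall z s, 0 <= F z s.
Hypothesis F_convex : forall s, convex_fun (F^~ s).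
Hypothesis F_le : forall z s, F z s <= a s + b * `|z|.
Hypothesis ma : measurable_fun setT a.
Hypothesis b_ge0 : 0 <= b.
Hypothesis a_integrable : P.-integrable setT (EFin \o (a \o Y)).

Let PY := distribution P Y.

Definition partial_mean (z : R) : R := fine (\int[PY]_s (F z s)%:E).

Let mFz z : measurable_fun setT (F z).
Proof.
exact: measurableT_comp mF (measurable_fun_pair (measurable_cst z) (@measurable_id _ S setT)).
Qed.

Let a_ge0 s : 0 <= a s.
Proof. by have := F_le 0 s; rewrite normr0 mulr0 addr0; exact: le_trans. Qed.

Let a_meanE : (\int[PY]_s (a s)%:E)%E = (fine (\int[PY]_s (a s)%:E))%:E.
Proof.
rewrite fineK // ge0_fin_numE; last by apply: integral_ge0 => s _; rewrite lee_fin.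
rewrite ge0_integral_distribution //; last exact/measurable_EFinP.
exact: (integrable_lty measurableT a_integrable).
Qed.

Let partial_integral_le z :
  (\int[PY]_s (F z s)%:E <= (fine (\int[PY]_s (a s)%:E) + b * `|z|)%:E)%E.
Proof.
apply: (@le_trans _ _ (\int[PY]_s ((a s)%:E + (b * `|z|)%:E))%E).
  apply: ge0_le_integral => //; first by move=> s _; rewrite lee_fin.
  - exact/measurable_EFinP.
  - by apply/measurable_EFinP; apply: measurable_funD.
  - by move=> s _; rewrite lee_fin.
rewrite ge0_integralD //; first last.
- by move=> s _; rewrite lee_fin mulr_ge0.
- exact/measurable_EFinP.
- by move=> s _; rewrite lee_fin.
rewrite EFinD -a_meanE integral_cst //.
by rewrite [X in (_ * X)%E]probability_setT mule1.
Qed.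

Lemma partial_meanE z : (\int[PY]_s (F z s)%:E)%E = (partial_mean z)%:E.
Proof.
rewrite /partial_mean fineK // ge0_fin_numE; last by apply: integral_ge0 => s _; rewrite lee_fin.
exact: le_lt_trans (partial_integral_le z) (ltry _).
Qed.

Lemma partial_mean_ge0 z : 0 <= partial_mean z.
Proof. by rewrite /partial_mean fine_ge0 // integral_ge0 // => s _; rewrite lee_fin. Qed.

Lemma linearly_bounded_partial_mean : linearly_bounded partial_mean.
Proof.
by exists (fine (\int[PY]_s (a s)%:E)), b => z; rewrite -lee_fin -partial_meanE.
Qed.

Lemma measurable_partial_mean : measurable_fun setT partial_mean.
Proof.
apply: (measurableT_comp (fine_measurable measurableT)).
apply: (@measurable_fun_fubini_tonelli_F _ _ _ _ _ PY (fun zs : R * S => (F zs.1 zs.2)%:E)).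
  exact/measurable_EFinP.
by move=> zs; rewrite lee_fin.
Qed.

Lemma convex_partial_mean : convex_fun partial_mean.
Proof.
move=> x y t t0 t1; have t1' : 0 <= 1 - t by rewrite subr_ge0.
rewrite -lee_fin -partial_meanE EFinD !EFinM -!partial_meanE.
apply: (@le_trans _ _ (\int[PY]_s (t%:E * (F x s)%:E + (1 - t)%:E * (F y s)%:E))%E).
  apply: ge0_le_integral => //; first by move=> s _; rewrite lee_fin.
  - exact/measurable_EFinP.
  - by apply: emeasurable_funD; apply: measurable_funeM; exact/measurable_EFinP.
  - by move=> s _; rewrite -!EFinM -EFinD lee_fin; exact: F_convex.
rewrite ge0_integralD //; first last.
- by apply: measurable_funeM; exact/measurable_EFinP.
- by move=> s _; rewrite mule_ge0 ?lee_fin.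
- by apply: measurable_funeM; exact/measurable_EFinP.
- by move=> s _; rewrite mule_ge0 ?lee_fin.
rewrite !ge0_integralZl //.
all: first [exact/measurable_EFinP | by move=> s _; rewrite lee_fin].
Qed.

Lemma integral_partial_mean (X : {mfun T >-> R}) (c : R) :
  independent_pair X Y ->
  (\int[P]_t (F (X t - c) (Y t))%:E = \int[P]_t (partial_mean (X t - c))%:E)%E.
Proof.
move=> XY; rewrite (@ge0_integral_independent_pair X Y (fun zs => (F (zs.1 - c) zs.2)%:E)) //.
- by apply: eq_integral => t _; rewrite /fubini_F -partial_meanE.
- apply/measurable_EFinP; exact: (measurableT_comp mF (measurable_fun_pair
    (measurable_funB measurable_fst (measurable_cst c)) measurable_snd)).
- by move=> zs; rewrite lee_fin.
Qed.

End PartialMean.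

Lemma le_integral_convex_independent (Y : {mfun T >-> S}) (F : R -> S -> R)
    (a : S -> R) (b : R) (X1 X2 : {mfun T >-> R}) (c1 c2 : R) :
  measurable_fun setT (fun zs : R * S => F zs.1 zs.2) ->
  (forall z s, 0 <= F z s) -> (forall s, convex_fun (F^~ s)) ->
  (forall z s, F z s <= a s + b * `|z|) -> measurable_fun setT a -> 0 <= b ->
  P.-integrable setT (EFin \o (a \o Y)) ->
  independent_pair X1 Y -> independent_pair X2 Y ->
  (forall phi : R -> R, convex_fun phi -> measurable_fun setT phi ->
     (forall z, 0 <= phi z) -> linearly_bounded phi ->
     (\int[P]_t (phi (X1 t - c1))%:E <= \int[P]_t (phi (X2 t - c2))%:E)%E) ->
  (\int[P]_t (F (X1 t - c1) (Y t))%:E <= \int[P]_t (F (X2 t - c2) (Y t))%:E)%E.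
Proof.
move=> mF F0 Fc Fle ma b0 ia X1Y X2Y le_cx.
rewrite !(integral_partial_mean mF F0 Fle ma b0 ia) //.
apply: le_cx; first exact: convex_partial_mean.
- exact: measurable_partial_mean.
- exact: partial_mean_ge0.
- exact: linearly_bounded_partial_mean.
Qed.

End IndependentPair.

Section Boxes.
Context (R : realType) (N : nat).

Definition box (A : 'I_N -> set R) : set (N.-tuple R) :=
  \bigcap_i ((fun y => tnth y i) @^-1` A i).

Lemma measurable_box A : (forall i, measurable (A i)) -> measurable (box A).
Proof.
move=> mA; apply: fin_bigcap_measurable; first exact: finite_finset.
by move=> i _; rewrite -[X in measurable X]setTI; exact: measurable_tnth.
Qed.

Definition boxes : set (set (N.-tuple R)) :=
  [set box A | A in [set A | forall i, measurable (A i)]].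

Lemma tuple_measurableE : @measurable _ (N.-tuple R) = <<s boxes >>.
Proof.
apply/seteqP; split.
- change (g_sigma_preimage (fun i (y : N.-tuple R) => tnth y i) `<=` <<s boxes >>).
  apply: smallest_sub; first exact: smallest_sigma_algebra.
  move=> D; rewrite -bigcup_seq => -[i _ [A mA <-]].
  apply: sub_sigma_algebra; exists (fun k => if k == i then A else setT).
    by move=> k /=; case: (k == i).
  apply/seteqP; split => y /=.
    by move=> yA; split => //; have := yA i Logic.I; rewrite eqxx.
  by move=> [_ Ay] k _; case: eqP => [->|].
- apply: smallest_sub; first exact: sigma_algebra_measurable.
  by move=> _ [A mA <-]; exact: measurable_box.
Qed.

Lemma boxes_setI_closed : setI_closed boxes.
Proof.
move=> _ _ [A mA <-] [D mD <-]; exists (fun i => A i `&` D i).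
  by move=> i; exact: measurableI.
apply/seteqP; split => y /=.
  by move=> yAD; split => i _; have [] := yAD i Logic.I.
by move=> [yA yD] i _; split; [exact: yA | exact: yD].
Qed.

Lemma boxesT : boxes setT.
Proof. by exists (fun=> setT) => //; apply/seteqP; split. Qed.

End Boxes.

Section MaskedTuple.
Context d (T : measurableType d) (R : realType) (P : probability T R) (N : nat).

Lemma independent_pair_boxes (X : {mfun T >-> R}) (Y : {mfun T >-> N.-tuple R}) :
  (forall A D, measurable A -> (forall i, measurable (D i)) ->
     P (X @^-1` A `&` Y @^-1` box D) = (P (X @^-1` A) * P (Y @^-1` box D))%E) ->
  independent_pair P X Y.
Proof.
move=> XY A D mA mD.
have mXA : measurable (X @^-1` A).
  by rewrite -[X in measurable X]setTI; exact: measurable_funP.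
have PXAE : P (X @^-1` A) = (fine (P (X @^-1` A)))%:E by rewrite fineK // fin_num_measure.
pose r : {nonneg R} := NngNum (fine_ge0 (measure_ge0 P (X @^-1` A))).
unshelve epose (mu := pushforward (mrestr P mXA) Y : {measure set (N.-tuple R) -> \bar R}).
  exact: measurable_funP.
pose nu : {measure set (N.-tuple R) -> \bar R} := mscale r (distribution P Y).
(* [mu] and [nu] are finite measures agreeing on the pi-system of boxes. *)
have : mu D = nu D.
  apply: (@measure_unique _ R _ (@boxes R N) (fun=> setT) (@tuple_measurableE R N)
    (@boxes_setI_closed R N) (fun=> @boxesT R N)) => //.
  - by apply/seteqP; split => // y _; exists 0%N.
  - move=> _ [B mB <-]; rewrite /mu /nu /= /pushforward /mrestr /mscale /=.
    by rewrite setIC XY // -PXAE.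
  - move=> _; rewrite /mu /= /pushforward /mrestr /=.
    apply: le_lt_trans (probability_le1 _ _) (ltry _).
    by apply: measurableI => //; rewrite -[X in measurable X]setTI; exact: measurable_funP.
by rewrite /mu /nu /= /pushforward /mrestr /mscale /= setIC -PXAE.
Qed.

Definition masked_rvs (B : 'I_N -> {RV P >-> R}) (K : pred 'I_N) (t : T) : N.-tuple R :=
  [tuple if K q then 0 else B q t | q < N].

Lemma tnth_masked_rvs B K t q :
  tnth (masked_rvs B K t) q = if K q then 0 else B q t.
Proof. exact: tnth_mktuple. Qed.

Lemma measurable_masked_rvs B K : measurable_fun setT (masked_rvs B K).
Proof.
apply/measurable_fun_tnthP => q.
rewrite (_ : _ \o _ = fun t => if K q then 0 else B q t); last first.
  by apply: funext => t; rewrite /= tnth_masked_rvs.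
by case: (K q) => //; exact: measurable_cst.
Qed.

HB.instance Definition _ B K :=
  isMeasurableFun.Build _ _ _ _ (masked_rvs B K) (measurable_masked_rvs B K).

Lemma masked_rvs_box B K D :
  masked_rvs B K @^-1` box D = [set t | forall q, D q (if K q then 0 else B q t)].
Proof.
apply/seteqP; split => t /=.
  by move=> tD q; have := tD q Logic.I; rewrite /preimage /= tnth_masked_rvs.
by move=> tD q _; rewrite /preimage /= tnth_masked_rvs.
Qed.

Lemma independent_pair_masked_rvs (B : 'I_N -> {RV P >-> R}) (K : pred 'I_N) (p : 'I_N) :
  independent_rvs B -> K p -> independent_pair P (B p) (masked_rvs B K).
Proof.
move=> indB Kp; apply: independent_pair_boxes => A D mA mD; rewrite masked_rvs_box.
have [D0|D0] := pselect (forall q, K q -> D q 0); last first.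
  have -> : [set t | forall q, D q (if K q then 0 else B q t)] = set0.
    apply/seteqP; split => t // tD; apply: D0 => q Kq.
    by have := tD q; rewrite Kq.
  by rewrite setI0 measure0 mule0.
have maskE : [set t | forall q, D q (if K q then 0 else B q t)] =
    \bigcap_q (B q @^-1` (if K q then setT else D q)).
  apply/seteqP; split => t /=.
    by move=> tD q _; have := tD q; case: (K q).
  by move=> tD q; have := tD q Logic.I; case: (boolP (K q)) => // Kq _; exact: D0.
have pairE : B p @^-1` A `&` \bigcap_q (B q @^-1` (if K q then setT else D q)) =
    \bigcap_q (B q @^-1` (if q == p then A else if K q then setT else D q)).
  apply/seteqP; split => t /=.
    by move=> [tA tD] q _; case: eqP => [->//|_]; exact: tD.
  move=> tD; split; first by have := tD p Logic.I; rewrite eqxx.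
  by move=> q _; have := tD q Logic.I; case: eqP => [->|//]; rewrite Kp.
rewrite maskE pairE !indB; last 2 first.
- by move=> q; case: (K q).
- by move=> q; case: (q == p) => //; case: (K q).
rewrite (bigD1 p) //= eqxx [in RHS](bigD1 p) //= Kp preimage_setT probability_setT mul1e.
by congr (_ * _)%E; apply: eq_bigr => q /negbTE ->.
Qed.

End MaskedTuple.

Section MeasurableLindley.
Context {dU} {U : measurableType dU} {R : realType}.
Variable v : U -> nat -> R.
Hypothesis mv : forall i, measurable_fun setT (v ^~ i).

Lemma measurable_lindley_wait k : measurable_fun setT (fun u => lindley_wait (v u) k).
Proof.
elim: k => [|k IH] /=; first exact: measurable_cst.
exact: measurable_maxr (measurable_cst _) (measurable_funD IH (mv k)).
Qed.

Lemma measurable_lindley_idle k : measurable_fun setT (fun u => lindley_idle (v u) k).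
Proof.
case: k => [|k] /=; first exact: measurable_cst.
apply: measurable_maxr; first exact: measurable_cst.
exact: measurable_funN (measurable_funD (measurable_lindley_wait k) (mv k)).
Qed.

Lemma measurable_lindley_cost w n : measurable_fun setT (fun u => lindley_cost w n (v u)).
Proof.
apply: measurable_funD; apply: measurable_funM => //; apply: measurable_sum => i.
  exact: measurable_lindley_idle.
exact: measurable_lindley_wait.
Qed.

End MeasurableLindley.

Section CostAsLindley.
Context d (T : measurableType d) (R : realType) (P : probability T R) (n : nat).
Variables (B : 'I_n.+1 -> {RV P >-> R}) (x : 'I_n.+1 -> R) (w : R).

Definition excess (tau : {perm 'I_n.+1}) (t : T) (i : nat) : R :=
  B (tau (inord i)) t - x (tau (inord i)).

Lemma waitingE tau i t : waiting tau x (fun i => B i) i t = lindley_wait (excess tau t) i.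
Proof. by elim: i => [|i IH] //=; rewrite IH addrA. Qed.

Lemma idleE tau i t : idle tau x (fun i => B i) i t = lindley_idle (excess tau t) i.
Proof. by case: i => [|i] //=; rewrite waitingE addrA. Qed.

Lemma measurable_excess tau : forall i, measurable_fun setT (excess tau ^~ i).
Proof. by move=> i; exact: measurable_funB. Qed.

Lemma ge0_integral_sum_ord (F : nat -> T -> R) :
  (forall i, measurable_fun setT (F i)) -> (forall i t, 0 <= F i t) ->
  (\sum_(i < n.+1) \int[P]_t (F i t)%:E = \int[P]_t (\sum_(i < n.+1) F i t)%:E)%E.
Proof.
move=> mF F0; under [RHS]eq_integral do rewrite -sumEFin.
rewrite ge0_integral_sum // => [i|i t _]; last by rewrite lee_fin.
exact/measurable_EFinP.
Qed.

Lemma ge0_integralZl_EFin (c : R) (f : T -> R) :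
  0 <= c -> measurable_fun setT f -> (forall t, 0 <= f t) ->
  (\int[P]_t (c%:E * (f t)%:E) = c%:E * \int[P]_t (f t)%:E)%E.
Proof.
move=> c0 mf f0; rewrite ge0_integralZl //; first exact/measurable_EFinP.
by move=> t _; rewrite lee_fin.
Qed.

Lemma costE tau : 0 <= w <= 1 ->
  cost P (fun i => B i) tau x w = (\int[P]_t (lindley_cost w n (excess tau t))%:E)%E.
Proof.
case/andP=> w0 w1; have w1' : 0 <= 1 - w by rewrite subr_ge0.
have mSI : measurable_fun setT (fun t => \sum_(i < n.+1) lindley_idle (excess tau t) i).
  by apply: measurable_sum => i; exact: (measurable_lindley_idle (measurable_excess tau) i).
have mSW : measurable_fun setT (fun t => \sum_(i < n.+1) lindley_wait (excess tau t) i).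
  by apply: measurable_sum => i; exact: (measurable_lindley_wait (measurable_excess tau) i).
rewrite /cost.
under eq_bigr do under eq_integral do rewrite idleE.
under [X in (_ + _ * X)%E]eq_bigr do under eq_integral do rewrite waitingE.
rewrite (ge0_integral_sum_ord (measurable_lindley_idle (measurable_excess tau))
  (fun i t => lindley_idle_ge0 _ i)).
rewrite (ge0_integral_sum_ord (measurable_lindley_wait (measurable_excess tau))
  (fun i t => lindley_wait_ge0 _ i)).
have SI0 t : 0 <= \sum_(i < n.+1) lindley_idle (excess tau t) i.
  by apply: sumr_ge0 => i _; exact: lindley_idle_ge0.
have SW0 t : 0 <= \sum_(i < n.+1) lindley_wait (excess tau t) i.
  by apply: sumr_ge0 => i _; exact: lindley_wait_ge0.
rewrite /lindley_cost; under [RHS]eq_integral do rewrite EFinD !EFinM.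
rewrite ge0_integralD //; first by rewrite !ge0_integralZl_EFin.
- by move=> t _; rewrite -EFinM lee_fin mulr_ge0.
- by apply/measurable_funeM/measurable_EFinP.
- by move=> t _; rewrite -EFinM lee_fin mulr_ge0.
- by apply/measurable_funeM/measurable_EFinP.
Qed.

End CostAsLindley.

Lemma integrable_linearly_bounded d (T : measurableType d) (R : realType)
    (P : probability T R) (X : T -> R) (c : R) (phi : R -> R) :
  measurable_fun setT X -> P.-integrable setT (EFin \o X) ->
  measurable_fun setT phi -> (forall z, 0 <= phi z) -> linearly_bounded phi ->
  P.-integrable setT (EFin \o (phi \o (fun t => X t - c))).
Proof.
move=> mX iX mphi phi0 [a [b phi_le]].
have ig : P.-integrable setT
    (fun t => ((`|a| + `|b| * `|c|)%:E + (`|b|)%:E * (`|X t|)%:E)%E).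
  apply: (integrableD measurableT (finite_measure_integrable_cst P _ measurableT)).
  by apply: integrableZl => //; exact: integrable_norm iX.
apply: le_integrable ig => //.
  by apply/measurable_EFinP; apply: measurableT_comp => //; exact: measurable_funB.
move=> t _ /=; rewrite lee_fin (ger0_norm (phi0 _)) ger0_norm; last first.
  by rewrite addr_ge0 ?mulr_ge0 ?addr_ge0.
have := phi_le (X t - c).
have : `|X t - c| <= `|X t| + `|c| by rewrite -(normrN c) ler_normD.
have : b * `|X t - c| <= `|b| * `|X t - c| by rewrite ler_wpM2r // ler_norm.
have := ler_norm a; have := normr_ge0 b; nra.
Qed.

Section DilationChain.
Context d (T : measurableType d) (R : realType) (P : probability T R) (n : nat).
Variable B : 'I_n.+1 -> {RV P >-> R}.
Hypothesis B_mean : forall i, P.-integrable setT (EFin \o B i).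
Hypothesis B_dil : forall i j : 'I_n.+1, val j = (val i).+1 -> le_dil P (B i) (B j).

Lemma le_integral_dil_chain (phi : R -> R) :
  convex_fun phi -> measurable_fun setT phi -> (forall z, 0 <= phi z) ->
  linearly_bounded phi -> forall i j : 'I_n.+1, (i <= j)%N ->
  (\int[P]_t (phi (B i t - mean P (B i)))%:E <=
   \int[P]_t (phi (B j t - mean P (B j)))%:E)%E.
Proof.
move=> cphi mphi phi0 bphi i j ij.
pose Q k := (\int[P]_t (phi (B (inord k) t - mean P (B (inord k))))%:E)%E.
have step : {in gtn n.+1, forall k, k.+1 \in gtn n.+1 -> (Q k <= Q k.+1)%E}.
  move=> k kn k1n; apply: B_dil => //; first by rewrite /= !inordK.
  - exact: integrable_linearly_bounded _ (measurable_funPT _) (B_mean _) mphi phi0 bphi.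
  - exact: integrable_linearly_bounded _ (measurable_funPT _) (B_mean _) mphi phi0 bphi.
have convex_dom : {in gtn n.+1 &, forall a b k, (a < k < b)%N -> k \in gtn n.+1}.
  by move=> a b _ bn k /andP[_ kb]; exact: ltn_trans kb bn.
have := homo_leq_in lexx le_trans convex_dom step (ltn_ord i) (ltn_ord j) ij.
by rewrite /Q !inord_val.
Qed.

End DilationChain.

Section SwapLast.
Context d (T : measurableType d) (R : realType) (P : probability T R) (n : nat).
Variables (B : 'I_n.+1 -> {RV P >-> R}) (w : R) (s : {perm 'I_n.+1}).
Hypothesis w01 : 0 <= w <= 1.

Let x i := mean P (B i).
Let j := (s^-1)%g ord_max.
(* Masking both candidates for slot [j] makes [Y] independent of each of them. *)
Let K : pred 'I_n.+1 := [pred q | (q == s ord_max) || (q == ord_max)].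
Let Y := masked_rvs B K.

Definition masked_cost (z : R) (y : n.+1.-tuple R) : R :=
  lindley_cost w n [eta (fun i => tnth y (s (inord i)) - x (s (inord i))) with val j |-> z].

Lemma cost_masked (tau : {perm 'I_n.+1}) :
  (forall q, q != j -> q != ord_max -> tau q = s q) ->
  cost P (fun i => B i) tau x w =
  (\int[P]_t (masked_cost (B (tau j) t - x (tau j)) (Y t))%:E)%E.
Proof.
move=> tau_s; rewrite costE //; apply: eq_integral => t _; congr EFin.
apply: eq_lindley_cost => i i_lt_n; rewrite /excess /=.
have i_ord : (i < n.+1)%N by exact: ltnW.
case: eqP => [ij | /eqP ij].
  by rewrite (_ : inord i = j) //; apply: val_inj; rewrite /= inordK.
have ij' : inord i != j by apply: contra ij => /eqP <-; rewrite inordK.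
have in' : inord i != ord_max :> 'I_n.+1.
  by apply: contraTneq i_lt_n => /(congr1 val); rewrite /= inordK // => ->; rewrite ltnn.
rewrite tau_s // tnth_masked_rvs /K /= (inj_eq perm_inj) (negbTE in').
by rewrite -[X in _ == X](permKV s) (inj_eq perm_inj) (negbTE ij').
Qed.

Lemma measurable_masked_cost :
  measurable_fun setT (fun zy : R * n.+1.-tuple R => masked_cost zy.1 zy.2).
Proof.
apply: (measurable_lindley_cost (v := fun zy => [eta _ with val j |-> zy.1])) => i /=.
case: eqP => _; first exact: measurable_fst.
apply: measurable_funB => //.
exact: measurableT_comp (measurable_tnth _) measurable_snd.
Qed.

Definition masked_bound (y : n.+1.-tuple R) : R :=
  n.+1%:R * \sum_(i < n) (`|tnth y (s (inord i))| + `|x (s (inord i))|).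

Lemma measurable_masked_bound : measurable_fun setT masked_bound.
Proof.
apply: measurable_funM => //; apply: measurable_sum => i; apply: measurable_funD => //.
exact: measurableT_comp (@normr_measurable R setT) (measurable_tnth _).
Qed.

Lemma masked_cost_le z y : masked_cost z y <= masked_bound y + n.+1%:R * n%:R * `|z|.
Proof.
apply: le_trans (lindley_cost_le _ _ w01) _.
rewrite /masked_bound -mulrA -mulrDr ler_wpM2l //.
have -> : n%:R * `|z| = \sum_(i < n) `|z| by rewrite sumr_const card_ord mulr_natl.
rewrite -big_split /=; apply: ler_sum => i _ /=; case: eqP => _.
  by rewrite lerDr addr_ge0.
by rewrite -(normrN (x _)); apply: le_trans (ler_normD _ _) _; rewrite lerDl.
Qed.

Lemma integrable_masked_bound :
  (forall i, P.-integrable setT (EFin \o B i)) ->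
  P.-integrable setT (EFin \o (masked_bound \o Y)).
Proof.
move=> B_mean.
have int_Y q : P.-integrable setT (fun t => (`|tnth (Y t) q|)%:E).
  under eq_fun do rewrite tnth_masked_rvs.
  case: (K q); last exact: integrable_norm (B_mean q).
  under eq_fun do rewrite normr0.
  exact: finite_measure_integrable_cst.
apply: (eq_integrable measurableT (fun t => (n.+1%:R)%:E *
    \sum_(i < n) ((`|tnth (Y t) (s (inord i))|)%:E + (`|x (s (inord i))|)%:E))%E).
  by move=> t _; rewrite /= /masked_bound EFinM sumEFin.
apply: integrableZl => //; apply: integrable_sum => // i _.
exact: integrableD (int_Y _) (finite_measure_integrable_cst _ _ _).
Qed.

Lemma cost_swap_last_le :
  independent_rvs B -> (forall i, P.-integrable setT (EFin \o B i)) ->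
  (forall i k : 'I_n.+1, val k = (val i).+1 -> le_dil P (B i) (B k)) ->
  (cost P (fun i => B i) (tperm j ord_max * s)%g x w <= cost P (fun i => B i) s x w)%E.
Proof.
move=> B_indep B_mean B_dil.
rewrite (cost_masked (tau := tperm j ord_max * s)); last first.
  by move=> q qj qn; rewrite permM tpermD // eq_sym.
rewrite (cost_masked (tau := s)) // permM tpermL permKV.
apply: (le_integral_convex_independent (Y := masked_rvs B K : {mfun T >-> _})
  (X1 := B (s ord_max)) (X2 := B ord_max) measurable_masked_cost _ _ masked_cost_le).
- by move=> z y; exact: lindley_cost_ge0.
- by move=> y; exact: convex_lindley_cost_with.
- exact: measurable_masked_bound.
- by rewrite mulr_ge0.
- exact: integrable_masked_bound.
- by apply: independent_pair_masked_rvs => //; apply/orP; left.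
- by apply: independent_pair_masked_rvs => //; apply/orP; right.
- move=> phi cphi mphi phi0 bphi.
  by apply: (le_integral_dil_chain B_mean B_dil cphi mphi phi0 bphi); exact: leq_ord.
Qed.

End SwapLast.

(* Patients/slots are indexed by 'I_n.+1 (i.e. n+1 >= 1 patients, 0-based);
   the last patient/slot "n" of the paper is ord_max. *)
Theorem propositionE1 (d : measure_display) (T : measurableType d)
  (R : realType) (P : probability T R) (n : nat)
  (B : 'I_n.+1 -> {RV P >-> R}) (w : R) :
  0 < w -> w < 1 ->
  independent_rvs B ->
  (forall i, finite_mean_var (B i)) ->
  (forall i j : 'I_n.+1, val j = (val i).+1 -> le_dil P (B i) (B j)) ->
  exists tau : {perm 'I_n.+1},
    tau ord_max = ord_max /\
    forall sigma : {perm 'I_n.+1},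
      (cost P (fun i => B i) tau (fun i => mean P (B i)) w
       <= cost P (fun i => B i) sigma (fun i => mean P (B i)) w)%E.
Proof.
move=> w0 w1 B_indep B_fmv B_dil.
have w01 : 0 <= w <= 1 by rewrite !ltW.
pose C s := cost P (fun i => B i) s (fun i => mean P (B i)) w.
have [s0 _ s0_min] := @arg_minP _ _ _ 1%g xpredT C isT.
exists (tperm (s0^-1 ord_max) ord_max * s0)%g; split; first by rewrite permM tpermR permKV.
move=> sigma; apply: le_trans (s0_min sigma isT).
exact: cost_swap_last_le w01 B_indep (fun i => (B_fmv i).1) B_dil.
Qed.
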